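(* Let $I=(x_1,\ldots,x_n)$ be any list of items with sizes $x_j\in(1/3,1]$. Let $I'=(x'_1,\ldots,x'_n)$ be a list with sizes in $(0,1]$ such that $x'_i>x_i$ for a single index $i\in[n]$ and $x'_j=x_j$ for all $j\ne i$. Then $\mathrm{BF}(I)\le\mathrm{BF}(I')$.
   Context: The online algorithm Best Fit (BF) processes a list of items with sizes in $(0,1]$ in the given order and packs the current item into the fullest bin (largest current load, i.e. sum of sizes of items in it) into which it fits without exceeding total size $1$, opening a new unit-capacity bin if it fits into no existing bin; items are never moved. $\mathrm{BF}(I)$ denotes the number of bins Best Fit uses on list $I$. *)

From Stdlib Require Import Reals List Lra.
Open Scope R_scope.

(* Bins are represented by the list of their current loads, in opening order.
   [best_bin loads x] returns [Some k] where k is the index of a fullest bin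
   (largest load) into which x fits (load + x <= 1); ties are broken by the
   smallest index. *)
Fixpoint best_bin_aux (loads : list R) (x : R) (k : nat) (best : option (nat * R))
  : option (nat * R) :=
  match loads with
  | nil => best
  | l :: ls =>
      let best' :=
        if Rle_dec (l + x) 1 then
          match best with
          | None => Some (k, l)
          | Some (_, bl) => if Rlt_dec bl l then Some (k, l) else best
          end
        else best in
      best_bin_aux ls x (S k) best'
  end.

Definition best_bin (loads : list R) (x : R) : option nat :=
  match best_bin_aux loads x 0 None with
  | None => None
  | Some (k, _) => Some k
  end.

Fixpoint add_at (loads : list R) (k : nat) (x : R) : list R :=
  match loads, k with
  | nil, _ => nil
  | l :: ls, O => (l + x) :: ls
  | l :: ls, S k' => l :: add_at ls k' x
  end.

Definition bf_step (loads : list R) (x : R) : list R :=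
  match best_bin loads x with
  | Some k => add_at loads k x
  | None => loads ++ (x :: nil)
  end.

Definition bf_loads (I : list R) : list R := fold_left bf_step I nil.

Definition BF (I : list R) : nat := length (bf_loads I).

(* Items larger than 1/3 share a bin at most in pairs, so up to order a Best Fit
   packing is described by the loads A of its one-item bins and the number p of
   its two-item bins; as a bin is opened only for an item fitting nowhere, the
   loads in A pairwise sum to more than 1.

   Run Best Fit on I and on a pointwise larger list I' side by side.  Both runs
   pack the same number of items, |A| + 2p = |A'| + 2p', and A stays dominated
   by A': its loads can be matched injectively to no smaller loads of A'.  When
   the run on I' fills a bin b0 that the matching uses, the load matched to b0
   fits the current item of I, so it is at most the load a0 of the bin the run
   on I fills and may take over the partner of a0.  When the run on I opens a
   bin while the run on I' fills b0, the load b0 is unmatched, and parity of the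
   item counts leaves a spare one-item bin of I'; it is larger than the new item
   because its load clashes with b0.  Finally
   BF(I) = |A| + p <= |A'| + p' = BF(I'). *)

From Stdlib Require Import Reals List Lra Lia Permutation Morphisms.
Import ListNotations.
Open Scope R_scope.

Lemma ForallOrdPairs_perm {T} (Rel : T -> T -> Prop) :
  (forall a b, Rel a b -> Rel b a) ->
  forall l l', Permutation l l' -> ForallOrdPairs Rel l -> ForallOrdPairs Rel l'.
Proof.
  intros Hsym l l' HP; induction HP as [| x l l' HP IH | x y l | l l' l'' _ IH1 _ IH2];
    intros Hl; auto.
  - inversion_clear Hl as [| ? ? Hx Hl']; constructor; [rewrite <- HP|]; auto.
  - inversion_clear Hl as [| ? ? Hy Hl']; inversion_clear Hy as [| ? ? Hyx Hyl].
    inversion_clear Hl' as [| ? ? Hx Hl''].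
    constructor; [constructor; auto | constructor; auto].
Qed.

Lemma in_perm_cons {T} (a : T) l : In a l -> exists l', Permutation l (a :: l').
Proof.
  intros (l1 & l2 & ->)%in_split; exists (l1 ++ l2).
  symmetry; apply Permutation_middle.
Qed.

Lemma Forall2_of_nth {T U} (P : T -> U -> Prop) (l : list T) (l' : list U) d d' :
  length l = length l' ->
  (forall j, (j < length l)%nat -> P (nth j l d) (nth j l' d')) ->
  Forall2 P l l'.
Proof.
  revert l'; induction l as [|a l IH]; intros [|a' l'] Hlen Hnth; try discriminate;
    constructor.
  - apply (Hnth 0%nat); simpl; lia.
  - apply IH; [simpl in Hlen; lia|].
    intros j Hj; apply (Hnth (S j)); simpl; lia.
Qed.

Definition best_bin_update (l x : R) (k : nat) (best : option (nat * R)) :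
  option (nat * R) :=
  if Rle_dec (l + x) 1 then
    match best with
    | None => Some (k, l)
    | Some (_, bl) => if Rlt_dec bl l then Some (k, l) else best
    end
  else best.

Lemma best_bin_aux_cons l ls x k best :
  best_bin_aux (l :: ls) x k best = best_bin_aux ls x (S k) (best_bin_update l x k best).
Proof. reflexivity. Qed.

Lemma best_bin_update_spec l x k best :
  let u := best_bin_update l x k best in
  (u = best \/ (u = Some (k, l) /\ l + x <= 1)) /\
  (l + x <= 1 -> exists jb, u = Some jb /\ l <= snd jb) /\
  (forall jb0, best = Some jb0 -> exists jb, u = Some jb /\ snd jb0 <= snd jb).
Proof.
  unfold best_bin_update.
  destruct (Rle_dec (l + x) 1) as [Hfit|Hfit];
    [destruct best as [[j b]|]; [destruct (Rlt_dec b l)|]|].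
  all: repeat split.
  all: first [ now left | now right
             | intros ?; eexists; split; [reflexivity | simpl; lra]
             | intros [? ?] [= <- <-]; eexists; split; [reflexivity | simpl; lra]
             | intros [? ?] E; eexists; split; [exact E | simpl; lra]
             | intros ?; lra | discriminate ].
Qed.

Lemma best_bin_aux_spec x loads : forall k best,
  match best_bin_aux loads x k best with
  | None => best = None /\ Forall (fun l => 1 < l + x) loads
  | Some (j, bl) =>
      (best = Some (j, bl) \/
       exists i, j = (k + i)%nat /\ nth_error loads i = Some bl /\ bl + x <= 1) /\
      Forall (fun l => l + x <= 1 -> l <= bl) loads /\
      (forall jb, best = Some jb -> snd jb <= bl)
  end.
Proof.
  induction loads as [|l ls IH]; intros k best.
  - cbn [best_bin_aux]; destruct best as [[j bl]|]; [|auto].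
    split; [now left|]. split; [constructor|]. intros jb [= <-]; simpl; lra.
  - rewrite best_bin_aux_cons.
    destruct (best_bin_update_spec l x k best) as (Hu & Hfit & Hbest).
    specialize (IH (S k) (best_bin_update l x k best)).
    destruct (best_bin_aux ls x (S k) _) as [[j bl]|].
    + destruct IH as (Horig & Hls & Hu_le). repeat split.
      * destruct Horig as [E | (i & -> & Hi & Hbl)].
        -- destruct Hu as [<- | [E' Hl]]; [now left|].
           rewrite E' in E; injection E as <- <-.
           right; exists 0%nat; rewrite Nat.add_0_r; auto.
        -- right; exists (S i); rewrite Nat.add_succ_r; auto.
      * constructor; [|exact Hls].
        intros Hl; destruct (Hfit Hl) as (jb & E & Hle).
        specialize (Hu_le jb E); lra.
      * intros jb0 E; destruct (Hbest jb0 E) as (jb & E' & Hle).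
        specialize (Hu_le jb E'); lra.
    + destruct IH as [Hnone Hls]. split.
      * destruct Hu as [<- | [E _]]; congruence.
      * constructor; [|exact Hls].
        destruct (Rle_dec (l + x) 1) as [Hl|Hl]; [|lra].
        destruct (Hfit Hl) as (jb & E & _); congruence.
Qed.

Lemma best_bin_None L x :
  best_bin L x = None -> Forall (fun l => 1 < l + x) L.
Proof.
  unfold best_bin; generalize (best_bin_aux_spec x L 0 None).
  destruct (best_bin_aux L x 0 None) as [[j bl]|]; [discriminate | tauto].
Qed.

Lemma best_bin_Some L x k : best_bin L x = Some k ->
  exists l, nth_error L k = Some l /\ l + x <= 1 /\
            Forall (fun m => m + x <= 1 -> m <= l) L.
Proof.
  unfold best_bin; generalize (best_bin_aux_spec x L 0 None).
  destruct (best_bin_aux L x 0 None) as [[j bl]|]; [|discriminate].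
  intros ([E | (i & -> & Hi & Hfit)] & HL & _) [= <-]; [discriminate|].
  exists bl; auto.
Qed.

Lemma add_at_perm L k l x : nth_error L k = Some l ->
  exists R, Permutation L (l :: R) /\ Permutation (add_at L k x) ((l + x) :: R).
Proof.
  revert k; induction L as [|m L IH]; intros [|k] Hk; try discriminate.
  - injection Hk as <-; exists L; split; reflexivity.
  - destruct (IH k Hk) as (R & HL & Hadd); exists (m :: R); simpl.
    split; [rewrite HL | rewrite Hadd]; apply perm_swap.
Qed.

Definition clash (a b : R) : Prop := 1 < a + b.

Definition bf_shape (L A : list R) (p : nat) : Prop :=
  exists D, Permutation L (A ++ D) /\ length D = p /\
    Forall (fun d => 2/3 < d) D /\ Forall (fun a => 1/3 < a) A /\
    ForallOrdPairs clash A.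

Inductive shape_step (A : list R) (p : nat) (x : R) : list R -> nat -> Prop :=
| shape_open :
    Forall (fun a => 1 < a + x) A -> shape_step A p x (x :: A) p
| shape_fill a0 A0 :
    Permutation A (a0 :: A0) -> a0 + x <= 1 ->
    Forall (fun a => a + x <= 1 -> a <= a0) A0 -> shape_step A p x A0 (S p).

Lemma clash_perm_cons A a A0 :
  ForallOrdPairs clash A -> Permutation A (a :: A0) ->
  Forall (clash a) A0 /\ ForallOrdPairs clash A0.
Proof.
  intros HA HP.
  assert (Hsym : forall a b, clash a b -> clash b a) by (unfold clash; intros; lra).
  pose proof (ForallOrdPairs_perm clash Hsym A (a :: A0) HP HA) as H.
  inversion H; auto.
Qed.

Lemma bf_shape_length L A p : bf_shape L A p -> length L = (length A + p)%nat.
Proof.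
  intros (D & HL & <- & _); rewrite HL; apply length_app.
Qed.

Lemma bf_shape_open L A p x :
  bf_shape L A p -> 1/3 < x -> Forall (fun l => 1 < l + x) L ->
  shape_step A p x (x :: A) p /\ bf_shape (L ++ [x]) (x :: A) p.
Proof.
  intros (D & HL & HD & HDbig & HAbig & HAclash) Hx Hnofit.
  rewrite HL in Hnofit; apply Forall_app in Hnofit as [HnofitA _].
  split; [now constructor|].
  exists D; repeat split; auto.
  - rewrite <- Permutation_cons_append, HL; reflexivity.
  - constructor; [|exact HAclash].
    revert HnofitA; apply Forall_impl; unfold clash; intros; lra.
Qed.

Lemma bf_shape_fill L A p l R x :
  bf_shape L A p -> 1/3 < x -> Permutation L (l :: R) -> l + x <= 1 ->
  Forall (fun m => m + x <= 1 -> m <= l) L ->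
  exists A0, shape_step A p x A0 (S p) /\ bf_shape ((l + x) :: R) A0 (S p).
Proof.
  intros (D & HL & HD & HDbig & HAbig & HAclash) Hx HLR Hfit Hbest.
  assert (HlA : In l A).
  { assert (Hl : In l (A ++ D)) by (rewrite <- HL, HLR; now left).
    apply in_app_or in Hl as [Hl|Hl]; [exact Hl|].
    rewrite Forall_forall in HDbig; specialize (HDbig l Hl); lra. }
  destruct (in_perm_cons l A HlA) as (A0 & HA).
  assert (HR : Permutation R (A0 ++ D)).
  { apply (Permutation_cons_inv (a := l)); rewrite <- HLR, HL, HA; reflexivity. }
  rewrite HA in HAbig; inversion_clear HAbig as [| ? ? Hl3 HA0big].
  exists A0; split.
  - apply shape_fill with l; auto.
    rewrite HL, HA in Hbest; apply Forall_app in Hbest as [Hbest _].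
    inversion Hbest; auto.
  - exists ((l + x) :: D); repeat split; simpl; auto.
    + rewrite HR; apply Permutation_middle.
    + constructor; [lra | exact HDbig].
    + apply (clash_perm_cons A l A0 HAclash HA).
Qed.

Lemma bf_step_shape L A p x : bf_shape L A p -> 1/3 < x ->
  exists A2 p2, shape_step A p x A2 p2 /\ bf_shape (bf_step L x) A2 p2.
Proof.
  intros HS Hx; unfold bf_step.
  destruct (best_bin L x) as [k|] eqn:E.
  - destruct (best_bin_Some L x k E) as (l & Hk & Hfit & Hbest).
    destruct (add_at_perm L k l x Hk) as (R & HLR & Hadd).
    destruct (bf_shape_fill L A p l R x HS Hx HLR Hfit Hbest) as (A0 & Hstep & HS').
    exists A0, (S p); split; [exact Hstep|].
    destruct HS' as (D & HD & HS'); exists D; split; [rewrite Hadd|]; auto.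
  - exists (x :: A), p; apply bf_shape_open; auto using best_bin_None.
Qed.

Definition dominated (A B : list R) : Prop :=
  exists M C, Forall2 Rle A M /\ Permutation B (M ++ C).

#[local] Instance dominated_Permutation :
  Proper (@Permutation R ==> @Permutation R ==> iff) dominated.
Proof.
  intros A A' HA B B' HB.
  split; intros (M & C & HM & HBM);
    [ destruct (Permutation_Forall2 HA HM) as (M' & HMM' & HM')
    | destruct (Permutation_Forall2 (Permutation_sym HA) HM) as (M' & HMM' & HM') ];
    exists M', C; split; auto; rewrite <- HMM', <- HBM; auto using Permutation_sym.
Qed.

Lemma dominated_length A B : dominated A B -> (length A <= length B)%nat.
Proof.
  intros (M & C & HM & HB); rewrite HB, length_app, <- (Forall2_length HM); lia.
Qed.

Lemma dominated_cons a b A B : a <= b -> dominated A B -> dominated (a :: A) (b :: B).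
Proof.
  intros Hab (M & C & HM & HB); exists (b :: M), C.
  split; [constructor | rewrite HB]; auto.
Qed.

Lemma dominated_cons_r A b B : dominated A B -> dominated A (b :: B).
Proof.
  intros (M & C & HM & HB); exists M, (b :: C); split; auto.
  rewrite HB; apply Permutation_middle.
Qed.

Lemma dominated_cons_l A a B : dominated (a :: A) B -> dominated A B.
Proof.
  intros (M & C & HM & HB); inversion_clear HM as [| ? m ? M0 _ HM0].
  exists M0, (m :: C); split; auto.
  rewrite HB; apply Permutation_middle.
Qed.

Lemma dominated_cons_l_le A a a' B :
  a <= a' -> dominated (a' :: A) B -> dominated (a :: A) B.
Proof.
  intros Ha (M & C & HM & HB); inversion HM as [| ? m ? M0 Hm HM0]; subst.
  exists (m :: M0), C; split; [constructor; [lra | exact HM0] | exact HB].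
Qed.

Lemma dominated_inv_cons_r A b B : dominated A (b :: B) ->
  dominated A B \/
  exists a A1, Permutation A (a :: A1) /\ a <= b /\ dominated A1 B.
Proof.
  intros (M & C & HM & HB).
  assert (Hb : In b (M ++ C)) by (rewrite <- HB; now left).
  apply in_app_or in Hb as [(M1 & M2 & ->)%in_split | (C1 & C2 & ->)%in_split].
  - apply Forall2_app_inv_r in HM as (A1 & A2' & HM1 & HM2 & ->).
    inversion_clear HM2 as [| a ? A2 ? Hab HM2'].
    right; exists a, (A1 ++ A2); split; [symmetry; apply Permutation_middle|].
    split; [exact Hab|]; exists (M1 ++ M2), C; split; [now apply Forall2_app|].
    rewrite <- app_assoc; apply Permutation_cons_app_inv with (a := b).
    rewrite HB, <- app_assoc; reflexivity.
  - left; exists M, (C1 ++ C2); split; [exact HM|].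
    rewrite app_assoc; apply Permutation_cons_app_inv with (a := b).
    rewrite HB, app_assoc; reflexivity.
Qed.

Lemma dominated_drop_r A b B :
  Forall (fun a => b < a) A -> dominated A (b :: B) -> dominated A B.
Proof.
  intros Hbelow [H | (a & A1 & HA & Hab & _)]%dominated_inv_cons_r; [exact H|].
  rewrite HA in Hbelow; inversion Hbelow; lra.
Qed.

Lemma dominated_remove a0 A b0 B :
  Forall (fun a => a <= b0 -> a <= a0) A ->
  dominated (a0 :: A) (b0 :: B) -> dominated A B.
Proof.
  intros Hswap [H | (a & A1 & HA & Hab & H)]%dominated_inv_cons_r;
    [exact (dominated_cons_l _ _ _ H)|].
  assert (Ha : In a (a0 :: A)) by (rewrite HA; now left).
  destruct Ha as [<- | (A2 & A3 & ->)%in_split].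
  - now rewrite (Permutation_cons_inv HA).
  - assert (HA1 : Permutation A1 (a0 :: A2 ++ A3)).
    { apply (Permutation_cons_inv (a := a)); rewrite <- HA.
      symmetry; apply (Permutation_middle (a0 :: A2)). }
    rewrite <- Permutation_middle.
    rewrite Forall_forall in Hswap.
    apply dominated_cons_l_le with a0; [|now rewrite <- HA1].
    apply Hswap; [apply in_elt | exact Hab].
Qed.

Lemma dominated_cons_spare x A B :
  (length A < length B)%nat -> Forall (fun b => x <= b) B ->
  dominated A B -> dominated (x :: A) B.
Proof.
  intros Hlen Habove (M & C & HM & HB).
  destruct C as [|c C].
  - rewrite HB, app_nil_r, <- (Forall2_length HM) in Hlen; lia.
  - exists (c :: M), C; split.
    + constructor; [|exact HM].
      rewrite Forall_forall in Habove; apply Habove.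
      rewrite HB; apply in_elt.
    + rewrite HB; symmetry; apply Permutation_middle.
Qed.

Definition coupled (A : list R) (p : nat) (A' : list R) (p' : nat) : Prop :=
  dominated A A' /\ (length A + 2 * p = length A' + 2 * p')%nat.

Lemma coupled_step A p A' p' x x' A2 p2 A2' p2' :
  coupled A p A' p' -> ForallOrdPairs clash A' -> x <= x' ->
  shape_step A p x A2 p2 -> shape_step A' p' x' A2' p2' ->
  coupled A2 p2 A2' p2'.
Proof.
  intros [Hdom Hlen] Hclash Hxx' Hstep Hstep'; unfold coupled.
  destruct Hstep as [Hopen | a0 A0 HA _ Hbest];
    destruct Hstep' as [_ | b0 B0 HB Hb0 _];
    try pose proof (Permutation_length HA); try pose proof (Permutation_length HB);
    simpl in *.
  - split; [now apply dominated_cons | lia].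
  - assert (Hbelow : Forall (fun a => b0 < a) A).
    { revert Hopen; apply Forall_impl; intros; lra. }
    assert (Habove : Forall (fun e => x <= e) B0).
    { destruct (clash_perm_cons A' b0 B0 Hclash HB) as [Hb0B0 _].
      revert Hb0B0; apply Forall_impl; unfold clash; intros; lra. }
    rewrite HB in Hdom; apply dominated_drop_r in Hdom; [|exact Hbelow].
    pose proof (dominated_length _ _ Hdom).
    split; [apply dominated_cons_spare; auto; lia | lia].
  - rewrite HA in Hdom.
    split; [apply dominated_cons_r, (dominated_cons_l _ a0), Hdom | lia].
  - rewrite HA, HB in Hdom; split; [|lia].
    apply dominated_remove with a0 b0; [|exact Hdom].
    revert Hbest; apply Forall_impl; intros a Ha Hab; apply Ha; lra.
Qed.

Lemma bf_fold_le I I' : Forall2 (fun x x' => 1/3 < x <= x') I I' ->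
  forall L A p L' A' p',
  bf_shape L A p -> bf_shape L' A' p' -> coupled A p A' p' ->
  (length (fold_left bf_step I L) <= length (fold_left bf_step I' L'))%nat.
Proof.
  induction 1 as [| x x' I I' Hxx' _ IH]; intros L A p L' A' p' HS HS' [Hdom Hlen]; simpl.
  - rewrite (bf_shape_length _ _ _ HS), (bf_shape_length _ _ _ HS').
    pose proof (dominated_length _ _ Hdom); lia.
  - destruct (bf_step_shape L A p x HS) as (A2 & p2 & Hstep & HS2); [lra|].
    destruct (bf_step_shape L' A' p' x' HS') as (A2' & p2' & Hstep' & HS2'); [lra|].
    apply (IH _ _ _ _ _ _ HS2 HS2').
    destruct HS' as (_ & _ & _ & _ & _ & Hclash).
    apply coupled_step with A p A' p' x x'; [split | | lra | |]; auto.
Qed.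

Theorem BF_monotone (I I' : list R) :
  Forall2 (fun x x' => 1/3 < x <= x') I I' -> (BF I <= BF I')%nat.
Proof.
  intros HI; apply (bf_fold_le I I' HI nil nil 0 nil nil 0).
  - exists nil; repeat split; constructor.
  - exists nil; repeat split; constructor.
  - split; [exists nil, nil; split; constructor | reflexivity].
Qed.

Theorem lemma17 (I I' : list R) (i : nat) :
  length I' = length I ->
  (forall j, (j < length I)%nat -> 1/3 < nth j I 0 <= 1) ->
  (forall j, (j < length I')%nat -> 0 < nth j I' 0 <= 1) ->
  (i < length I)%nat ->
  nth i I 0 < nth i I' 0 ->
  (forall j, (j < length I)%nat -> j <> i -> nth j I' 0 = nth j I 0) ->
  (BF I <= BF I')%nat.
Proof.
  intros Hlen Hsize _ _ Hlt Hsame.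
  apply BF_monotone, (Forall2_of_nth _ _ _ 0 0); [auto|].
  intros j Hj; split; [apply Hsize; exact Hj|].
  destruct (Nat.eq_dec j i) as [-> | Hji]; [lra|].
  rewrite Hsame; [lra | exact Hj | exact Hji].
Qed.
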